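(* For a set $A\subset\mathbb{R}^2\times\mathbb{R}^2$ the following conditions are equivalent: (i) for all $(x^0,y^0),(x^1,y^1)\in A$, $$(1-t)c(x^0,y^0)+t\,c(x^1,y^1)\le t(1-t)\,c(y^0,y^1),\qquad t\in[0,1];$$ (ii) there is $G\in\mathfrak{M}$ such that $c(x,y)\le\phi_G(y)$ for all $(x,y)\in A$.
   Context: $c(x,y)=(x_1-y_1)(x_2-y_2)$ for $x,y\in\mathbb{R}^2$. A set $G\subset\mathbb{R}^2$ is monotone if $c(r,s)\ge0$ for all $r,s\in G$, maximal monotone if it is not a proper subset of a monotone set; $\mathfrak{M}$ is the family of maximal monotone sets. $\phi_G(y)=\inf_{x\in G}c(x,y)$. *)

From HB Require Import structures.
From mathcomp Require Import all_boot all_order all_algebra.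
From mathcomp Require Import all_classical all_reals ereal.
Set Implicit Arguments. Unset Strict Implicit. Unset Printing Implicit Defensive.
Import Order.TTheory GRing.Theory Num.Theory.
Local Open Scope classical_set_scope.
Local Open Scope ring_scope.

Definition cost {R : realType} (x y : R * R) : R := (x.1 - y.1) * (x.2 - y.2).

Definition monotone {R : realType} (G : set (R * R)) : Prop :=
  forall r s, G r -> G s -> 0 <= cost r s.

Definition maximal_monotone {R : realType} (G : set (R * R)) : Prop :=
  monotone G /\ forall H : set (R * R), monotone H -> G `<=` H -> H = G.

Definition phi {R : realType} (G : set (R * R)) (y : R * R) : \bar R :=
  ereal_inf [set (cost x y)%:E | x in G].

From mathcomp Require Import all_boot all_order all_algebra.
From mathcomp Require Import all_classical all_reals ereal.
From mathcomp Require Import ring lra.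
Set Implicit Arguments. Unset Strict Implicit. Unset Printing Implicit Defensive.
Import Order.TTheory GRing.Theory Num.Theory.
Local Open Scope classical_set_scope.
Local Open Scope ring_scope.

(* In the rotated coordinates s = r.1 + r.2, d = r.1 - r.2 one has
   4 c(r, q) = (s_r - s_q)^2 - (d_r - d_q)^2, so the graph d = U(s) of a
   1-Lipschitz U is maximal monotone.  For (x, y) in A put B = -4 c(x, y) >= 0;
   then c(x, y) <= c(g, y) says |d_g - d_y| <= sqrt((s_g - s_y)^2 + B).
   Minimising (i) over t shows that these constraints, one for each point of A,
   are pairwise compatible, so their lower envelope U is a 1-Lipschitz function
   satisfying all of them.  Conversely a maximal monotone G contains some g with
   c(g, y_t) <= 0 at y_t = (1 - t) y0 + t y1, and
   (1 - t) c(g, y0) + t c(g, y1) = c(g, y_t) + t (1 - t) c(y0, y1). *)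

Section Inequalities.
Variable R : realType.
Implicit Types (p q a b K : R).

Lemma sqrt_sqrD_triangle p q a b :
  Num.sqrt ((p + q) ^+ 2 + (a + b) ^+ 2) <=
  Num.sqrt (p ^+ 2 + a ^+ 2) + Num.sqrt (q ^+ 2 + b ^+ 2).
Proof.
have sqrD_ge0 (u v : R) : 0 <= u ^+ 2 + v ^+ 2 by rewrite addr_ge0 ?sqr_ge0.
set h0 := Num.sqrt (p ^+ 2 + _); set h1 := Num.sqrt (q ^+ 2 + _).
have h0E : h0 ^+ 2 = p ^+ 2 + a ^+ 2 by rewrite sqr_sqrtr.
have h1E : h1 ^+ 2 = q ^+ 2 + b ^+ 2 by rewrite sqr_sqrtr.
have h0_ge0 : 0 <= h0 := sqrtr_ge0 _.
have h1_ge0 : 0 <= h1 := sqrtr_ge0 _.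
have cauchy_schwarz : p * q + a * b <= h0 * h1.
  rewrite -sqrtrM // (le_trans (ler_norm _)) // -sqrtr_sqr ler_wsqrtr //.
  have := sqr_ge0 (p * b - a * q); nra.
by rewrite -(ger0_norm (addr_ge0 h0_ge0 h1_ge0)) -sqrtr_sqr ler_wsqrtr //; nra.
Qed.

Lemma le_sqrD_of_interpolation K b0 b1 : 0 <= b0 -> 0 <= b1 ->
  (forall t, 0 <= t <= 1 -> t * (1 - t) * K <= (1 - t) * b0 ^+ 2 + t * b1 ^+ 2) ->
  K <= (b0 + b1) ^+ 2.
Proof.
move=> b0_ge0 b1_ge0 hK; rewrite leNgt; apply/negP => ltK.
have K_gt0 : 0 < K by apply: le_lt_trans ltK; exact: sqr_ge0.
set k := Num.sqrt K.
have kE : k ^+ 2 = K by rewrite sqr_sqrtr // ltW.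
have k_ge0 : 0 <= k := sqrtr_ge0 _.
have lt_k : b0 + b1 < k by rewrite ltNge; apply/negP => le_k; nra.
(* The bound is sharp at t = b0 / (b0 + b1); raising both b0 and b1 a little
   keeps t inside (0, 1) even when one of them vanishes. *)
set e := (k - (b0 + b1)) / 4; set c0 := b0 + e; set c1 := b1 + e.
set T := c0 + c1.
have e_gt0 : 0 < e by rewrite divr_gt0 // subr_gt0.
have c0_gt0 : 0 < c0 by rewrite /c0; lra.
have c1_gt0 : 0 < c1 by rewrite /c1; lra.
have lt_TK : T ^+ 2 < K.
  have T_lt : T < k by rewrite /T /c0 /c1 /e; lra.
  have : 0 <= T by rewrite /T; lra.
  nra.
pose t := c0 / T.
have tE : t * T = c0 by rewrite /t mulfVK // gt_eqF // /T; lra.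
have t1E : (1 - t) * T = c1 by rewrite mulrBl tE mul1r /T; ring.
have t01 : 0 <= t <= 1 by rewrite divr_ge0 ?ler_pdivrMr ?mul1r /T; lra.
have scaled_hK : c0 * c1 * K <= T * (c1 * b0 ^+ 2 + c0 * b1 ^+ 2).
  rewrite -tE -t1E.
  have -> : t * T * ((1 - t) * T) * K = T ^+ 2 * (t * (1 - t) * K) by ring.
  have -> : T * ((1 - t) * T * b0 ^+ 2 + t * T * b1 ^+ 2) =
            T ^+ 2 * ((1 - t) * b0 ^+ 2 + t * b1 ^+ 2) by ring.
  by rewrite ler_wpM2l ?sqr_ge0 ?hK.
have le_c0c1T : c1 * b0 ^+ 2 + c0 * b1 ^+ 2 <= c0 * c1 * T.
  have sq0 : b0 ^+ 2 <= c0 ^+ 2 by rewrite /c0; nra.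
  have sq1 : b1 ^+ 2 <= c1 ^+ 2 by rewrite /c1; nra.
  have := ler_wpM2l (ltW c1_gt0) sq0; have := ler_wpM2l (ltW c0_gt0) sq1.
  rewrite /T; nra.
have c0c1_gt0 : 0 < c0 * c1 by exact: mulr_gt0.
nra.
Qed.

End Inequalities.

Section Nonexpansive.
Variable R : realType.

Definition nonexpansive (U : R -> R) := forall s t, `|U s - U t| <= `|s - t|.

Lemma nonexpansiveP (U : R -> R) :
  (forall s t, U s <= U t + `|s - t|) -> nonexpansive U.
Proof.
move=> hU s t; have := hU s t; have := hU t s.
by rewrite distrC ler_norml; lra.
Qed.

Lemma inf_nonexpansive (I : Type) (A : set I) (f : I -> R -> R) :
  (forall s, has_lbound [set f i s | i in A]) ->
  (forall i, A i -> nonexpansive (f i)) ->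
  nonexpansive (fun s => inf [set f i s | i in A]).
Proof.
move=> lbA fA; apply: nonexpansiveP => s t.
have [[i Ai]|A0] := pselect (exists i, A i); last first.
  have E u : [set f i u | i in A] = set0.
    by apply/seteqP; split => // y [i Ai _]; apply: A0; exists i.
  by rewrite !E inf0 add0r.
rewrite -lerBlDr; apply: lb_le_inf; first by exists (f i t), i.
move=> _ [j Aj <-]; rewrite lerBlDr.
have := fA j Aj s t; rewrite ler_norml => /andP[_ hj].
apply: le_trans (ge_inf (lbA s) _) _; first by exists j.
by rewrite -lerBlDl.
Qed.

End Nonexpansive.

Section Monotone.
Variable R : realType.
Implicit Types (r s g y : R * R) (G : set (R * R)).

Definition psum r := r.1 + r.2.
Definition pdiff r := r.1 - r.2.

Lemma cost_rotated r s :
  4 * cost r s = (psum r - psum s) ^+ 2 - (pdiff r - pdiff s) ^+ 2.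
Proof. by rewrite /cost /psum /pdiff; ring. Qed.

Lemma costC r s : cost r s = cost s r.
Proof. by rewrite /cost; ring. Qed.

Lemma cost_convex_combination g y0 y1 t :
  (1 - t) * cost g y0 + t * cost g y1 =
  cost g ((1 - t) * y0.1 + t * y1.1, (1 - t) * y0.2 + t * y1.2)
  + t * (1 - t) * cost y0 y1.
Proof. by rewrite /cost /=; ring. Qed.

Definition rotated_graph (U : R -> R) : set (R * R) :=
  [set g | pdiff g = U (psum g)].

Lemma rotated_graph_maximal_monotone (U : R -> R) :
  nonexpansive U -> maximal_monotone (rotated_graph U).
Proof.
move=> hU; split=> [r s /= Ur Us | H monoH sub_H].
  have := hU (psum r) (psum s); rewrite -Ur -Us -!sqrtr_sqr ler_sqrt ?sqr_ge0 //.
  by have := cost_rotated r s; lra.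
apply/seteqP; split=> // h Hh.
pose g := ((psum h + U (psum h)) / 2, (psum h - U (psum h)) / 2).
have psum_g : psum g = psum h by rewrite {1}/psum /g /=; lra.
have pdiff_g : pdiff g = U (psum h) by rewrite /pdiff /g /=; lra.
have Ug : rotated_graph U g by rewrite /rotated_graph /= psum_g pdiff_g.
have := monoH g h (sub_H g Ug) Hh; have := cost_rotated g h.
rewrite psum_g pdiff_g subrr expr0n /= sub0r => rot cost_ge0.
have : (U (psum h) - pdiff h) ^+ 2 = 0.
  by apply/eqP; rewrite eq_le sqr_ge0 andbT; lra.
by move/eqP; rewrite sqrf_eq0 subr_eq0 => /eqP.
Qed.

Lemma maximal_monotone_cost_le0 G y :
  maximal_monotone G -> exists2 g, G g & cost g y <= 0.
Proof.
case=> monoG maxG; apply: contrapT => noG.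
have cost_ge0 g : G g -> 0 <= cost g y.
  by move=> Gg; rewrite leNgt; apply/negP => /ltW le0; apply: noG; exists g.
have mono_Gy : monotone (G `|` [set y]).
  move=> r s [Gr|->] [Gs|->].
  - exact: monoG.
  - exact: cost_ge0.
  - by rewrite costC; apply: cost_ge0.
  - by rewrite /cost subrr mul0r.
have Gy : G y by rewrite -(maxG _ mono_Gy); [right | move=> g; left].
by apply: noG; exists y; rewrite // /cost subrr mul0r.
Qed.

Lemma cost_le_of_phi G x y g :
  ((cost x y)%:E <= phi G y)%E -> G g -> cost x y <= cost g y.
Proof.
move=> le_phi Gg; rewrite -lee_fin (le_trans le_phi) //.
by apply: ge_ereal_inf; exists (cost g y)%:E => //; exists g.
Qed.

End Monotone.

Section Radius.
Variable R : realType.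
Implicit Types (x y g : R * R) (z : (R * R) * (R * R)).

Definition radius z (s : R) := Num.sqrt ((s - psum z.2) ^+ 2 - 4 * cost z.1 z.2).

Lemma radiusE x y s : cost x y <= 0 ->
  radius (x, y) s =
  Num.sqrt ((s - psum y) ^+ 2 + Num.sqrt (- (4 * cost x y)) ^+ 2).
Proof. by move=> cost_le0; rewrite sqr_sqrtr //; lra. Qed.

Lemma radius_nonexpansive x y : cost x y <= 0 -> nonexpansive (radius (x, y)).
Proof.
move=> cost_le0; apply: nonexpansiveP => s t; rewrite !radiusE //.
have := sqrt_sqrD_triangle (t - psum y) (s - t) (Num.sqrt (- (4 * cost x y))) 0.
by rewrite addr0 expr0n /= addr0 sqrtr_sqr (_ : t - _ + _ = s - psum y) //; ring.
Qed.

Lemma cost_le_of_pdiff_near x y g : cost x y <= 0 ->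
  `|pdiff g - pdiff y| <= radius (x, y) (psum g) -> cost x y <= cost g y.
Proof.
move=> cost_le0; rewrite /radius -sqrtr_sqr ler_sqrt /=.
  by have := cost_rotated g y; lra.
by rewrite addr_ge0 ?sqr_ge0 //; lra.
Qed.

End Radius.

Definition interpolation_bound (R : realType) (A : set ((R * R) * (R * R))) :=
  forall x0 y0 x1 y1 : R * R, A (x0, y0) -> A (x1, y1) ->
    forall t : R, 0 <= t <= 1 ->
      (1 - t) * cost x0 y0 + t * cost x1 y1 <= t * (1 - t) * cost y0 y1.

Section Envelope.
Variables (R : realType) (A : set ((R * R) * (R * R))).
Hypothesis hA : interpolation_bound A.

Lemma cost_le0 x y : A (x, y) -> cost x y <= 0.
Proof.
move=> Axy; have := hA Axy Axy (t := 0).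
by rewrite lexx ler01 /= => /(_ isT); lra.
Qed.

Lemma radius_gap x0 y0 x1 y1 s : A (x0, y0) -> A (x1, y1) ->
  pdiff y0 - radius (x0, y0) s <= pdiff y1 + radius (x1, y1) s.
Proof.
move=> A0 A1; have c0_le0 := cost_le0 A0; have c1_le0 := cost_le0 A1.
rewrite !radiusE //.
set b0 := Num.sqrt (- (4 * cost x0 y0)); set b1 := Num.sqrt (- (4 * cost x1 y1)).
have b0E : b0 ^+ 2 = - (4 * cost x0 y0) by rewrite sqr_sqrtr //; lra.
have b1E : b1 ^+ 2 = - (4 * cost x1 y1) by rewrite sqr_sqrtr //; lra.
have gap :
    (pdiff y0 - pdiff y1) ^+ 2 - (psum y0 - psum y1) ^+ 2 <= (b0 + b1) ^+ 2.
  apply: le_sqrD_of_interpolation (sqrtr_ge0 _) (sqrtr_ge0 _) _ => t t01.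
  have := hA A0 A1 t01.
  have := congr1 (fun u => t * (1 - t) * u) (cost_rotated y0 y1).
  rewrite b0E b1E /=; lra.
have := sqrt_sqrD_triangle (s - psum y0) (psum y1 - s) b0 b1.
rewrite -[psum y1 - s]opprB sqrrN => triangle.
suff : pdiff y0 - pdiff y1 <=
       Num.sqrt ((s - psum y0 + - (s - psum y1)) ^+ 2 + (b0 + b1) ^+ 2) by lra.
by rewrite (le_trans (ler_norm _)) // -sqrtr_sqr ler_wsqrtr //; lra.
Qed.

Definition envelope s := inf [set pdiff z.2 + radius z s | z in A].

Lemma envelope_has_lbound s : has_lbound [set pdiff z.2 + radius z s | z in A].
Proof.
have [[[x y] Axy]|A0] := pselect (exists z, A z).
  exists (pdiff y - radius (x, y) s) => _ [[x' y'] Axy' <-].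
  exact: radius_gap Axy Axy'.
by exists 0 => y [z Az _]; case: A0; exists z.
Qed.

Lemma envelope_nonexpansive : nonexpansive envelope.
Proof.
apply: inf_nonexpansive envelope_has_lbound _ => -[x y] Axy s t.
rewrite opprD addrACA subrr add0r.
exact: radius_nonexpansive (cost_le0 Axy) s t.
Qed.

Lemma envelope_near x y s :
  A (x, y) -> `|envelope s - pdiff y| <= radius (x, y) s.
Proof.
move=> Axy; rewrite ler_distl; apply/andP; split.
  apply: lb_le_inf; first by exists (pdiff y + radius (x, y) s), (x, y).
  by move=> _ [[x' y'] Axy' <-]; exact: radius_gap Axy Axy'.
by apply: (ge_inf (envelope_has_lbound s)); exists (x, y).
Qed.

End Envelope.

Theorem lemma6 (R : realType) (A : set ((R * R) * (R * R))) :
  (forall x0 y0 x1 y1 : R * R, A (x0, y0) -> A (x1, y1) ->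
     forall t : R, 0 <= t <= 1 ->
       (1 - t) * cost x0 y0 + t * cost x1 y1 <= t * (1 - t) * cost y0 y1)
  <->
  (exists G : set (R * R), maximal_monotone G /\
     forall x y : R * R, A (x, y) -> ((cost x y)%:E <= phi G y)%E).
Proof.
split=> [hA | [G [maxG leG]] x0 y0 x1 y1 A0 A1 t /andP[t_ge0 t_le1]].
  exists (rotated_graph (envelope A)); split.
    exact/rotated_graph_maximal_monotone/envelope_nonexpansive.
  move=> x y Axy; apply/ereal_infP => _ [g /= Gg <-]; rewrite lee_fin.
  apply: cost_le_of_pdiff_near (cost_le0 hA Axy) _.
  by rewrite Gg; exact: (envelope_near hA (psum g) Axy).
have [g Gg cost_g_le0] := maximal_monotone_cost_le0
  ((1 - t) * y0.1 + t * y1.1, (1 - t) * y0.2 + t * y1.2) maxG.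
have one_sub_t_ge0 : 0 <= 1 - t by rewrite subr_ge0.
have le0 := ler_wpM2l one_sub_t_ge0 (cost_le_of_phi (leG _ _ A0) Gg).
have le1 := ler_wpM2l t_ge0 (cost_le_of_phi (leG _ _ A1) Gg).
by have := cost_convex_combination g y0 y1 t; lra.
Qed.
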